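(* $D(19,\{3,4\})\ge 33$; equivalently, every $\{K_3,K_4\}$-decomposition of $K_{19}$ has $\alpha\ge 9$.
   Context: A $\{K_3,K_4\}$-decomposition of $K_v$ is a collection of subgraphs, each isomorphic to $K_3$ or $K_4$, such that every edge of $K_v$ lies in exactly one of them. $\alpha$ and $\beta$ denote the numbers of copies of $K_3$ and $K_4$ in the decomposition (so $3\alpha+6\beta=\binom{v}{2}$). $D(v,\{3,4\})$ is the minimum of $\alpha+\beta$ over all such decompositions of $K_v$. *)

From mathcomp Require Import all_boot.
Set Implicit Arguments. Unset Strict Implicit. Unset Printing Implicit Defensive.

(* Each block (copy of K3 or
   K4, a complete subgraph) is given by its vertex set, of size 3 or 4.
   The list may a priori repeat blocks; every edge {x,y} of K_v must lie in
   exactly one block of the list (counted with multiplicity). *)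
Definition is_K34_decomp (v : nat) (s : seq {set 'I_v}) : Prop :=
  (forall B, B \in s -> (#|B| == 3) || (#|B| == 4)) /\
  (forall x y : 'I_v, x != y -> count (fun B : {set 'I_v} => (x \in B) && (y \in B)) s = 1).

Definition alpha (v : nat) (s : seq {set 'I_v}) : nat := count (fun B : {set 'I_v} => #|B| == 3) s.
Definition beta (v : nat) (s : seq {set 'I_v}) : nat := count (fun B : {set 'I_v} => #|B| == 4) s.

From mathcomp Require Import all_boot zify.

Set Implicit Arguments.

(* Counting the 18 edges at a vertex x gives 2 t_x + 3 b_x = 18, where t_x and
   b_x are the numbers of triangles and of K4's through x; summing over x,
   alpha + 2 beta = 57.  So alpha + beta <= 32 would force 1 <= alpha <= 7.
   Let W be the set of vertices lying on a triangle.  For x in W, 3 divides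
   t_x, so t_x >= 3, and the triangles at x cover 2 t_x >= 6 edges from x into
   W; hence |W| >= 7, while 3 |W| <= sum_W t_x = 3 alpha <= 21.  Thus |W| = 7
   and the triangles at each x in W use up all edges from x into W, so no K4
   meets W twice.  Counting K4's through W then gives
   beta >= sum_W b_x = 42 - 2 alpha, which with alpha + 2 beta = 57 forces
   alpha >= 9, a contradiction. *)

Definition block_deg (k : nat) {v : nat} (s : seq {set 'I_v}) (x : 'I_v) : nat :=
  count (fun B : {set 'I_v} => (x \in B) && (#|B| == k)) s.

Definition tri_vertices {v : nat} (s : seq {set 'I_v}) : {set 'I_v} :=
  [set x | 0 < block_deg 3 s x].

Section Decomposition.

Variables (v : nat) (s : seq {set 'I_v}).

Local Notation W := (tri_vertices s).

Lemma sum_const_count (P : pred {set 'I_v}) (c : nat) :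
  \sum_(B <- s | P B) c = c * count P s.
Proof. by rewrite big_const_seq iter_addn_0. Qed.

Lemma sum_count_incident (P : pred {set 'I_v}) (A : {set 'I_v}) :
  \sum_(x in A) count (fun B : {set 'I_v} => (x \in B) && P B) s =
  \sum_(B <- s | P B) #|B :&: A|.
Proof.
under eq_bigr do rewrite -sum1_count.
rewrite (exchange_big_dep P) => [|x B _ /andP[]//] /=.
apply: eq_bigr => B PB; rewrite -sum1_card; apply: eq_bigl => x.
by rewrite !inE PB andbT andbC.
Qed.

Lemma sum_block_deg (k : nat) :
  \sum_(x in [set: 'I_v]) block_deg k s x =
  k * count (fun B : {set 'I_v} => #|B| == k) s.
Proof.
rewrite sum_count_incident -sum_const_count big_seq_cond [RHS]big_seq_cond.
by apply: eq_bigr => B /andP[_ /eqP <-]; rewrite setIT.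
Qed.

Lemma sum_tri_deg_tri_vertices : \sum_(x in W) block_deg 3 s x = 3 * alpha s.
Proof.
rewrite -sum_block_deg big_mkcond [RHS]big_mkcond; apply: eq_bigr => x _.
by rewrite in_setT inE lt0n; case: eqP.
Qed.

Lemma tri_sub_tri_vertices (B : {set 'I_v}) :
  B \in s -> #|B| == 3 -> B \subset W.
Proof.
move=> Bs B3; apply/subsetP => x xB; rewrite inE -has_count.
by apply/hasP; exists B; rewrite ?xB.
Qed.

Lemma tri_vertices_nonempty : 0 < alpha s -> exists x, x \in W.
Proof.
rewrite /alpha -has_count => /hasP[B Bs B3].
have [x xB] : exists x, x \in B by apply/set0Pn; rewrite -card_gt0 (eqP B3).
by exists x; apply: subsetP xB; apply: tri_sub_tri_vertices.
Qed.

Hypothesis decomp : is_K34_decomp s.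

Lemma card_link (x : 'I_v) (A : {set 'I_v}) :
  #|A :\ x| = \sum_(B <- s | x \in B) #|B :&: (A :\ x)|.
Proof.
have [_ edge_once] := decomp.
rewrite -sum1_card -sum_count_incident; apply: eq_bigr => y.
by rewrite in_setD1 => /andP[yx _]; rewrite edge_once.
Qed.

Lemma big_K34_split (P : pred {set 'I_v}) (F : {set 'I_v} -> nat) :
  \sum_(B <- s | P B) F B =
  \sum_(B <- s | P B && (#|B| == 3)) F B + \sum_(B <- s | P B && (#|B| == 4)) F B.
Proof.
rewrite (bigID (fun B : {set 'I_v} => #|B| == 3)) /=; congr (_ + _).
rewrite big_seq_cond [RHS]big_seq_cond; apply: eq_bigl => B.
have [size34 _] := decomp.
case Bs: (B \in s) => //=.
by case/orP: (size34 B Bs) => /eqP ->; rewrite ?andbF ?andbT.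
Qed.

Lemma block_deg_identity (x : 'I_v) :
  2 * block_deg 3 s x + 3 * block_deg 4 s x = v.-1.
Proof.
have cardT : #|[set: 'I_v] :\ x| = v.-1.
  by rewrite setTD cardsC1 card_ord.
rewrite -cardT card_link big_K34_split /block_deg -!sum_const_count.
have link_size k (B : {set 'I_v}) : x \in B -> #|B| = k -> #|B :&: ([set: 'I_v] :\ x)| = k.-1.
  by move=> xB <-; rewrite setIDA setIT (cardsD1 x B) xB.
by congr (_ + _); apply: eq_bigr => B /andP[xB /eqP/link_size->].
Qed.

Lemma sum_block_deg_identity (A : {set 'I_v}) :
  2 * \sum_(x in A) block_deg 3 s x + 3 * \sum_(x in A) block_deg 4 s x =
  #|A| * v.-1.
Proof.
rewrite !big_distrr -big_split /= -sum_nat_const.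
by apply: eq_bigr => x _; apply: block_deg_identity.
Qed.

Lemma alpha_beta_count : 6 * alpha s + 12 * beta s = v * v.-1.
Proof.
have := sum_block_deg_identity [set: 'I_v].
by rewrite !sum_block_deg cardsT card_ord !mulnA.
Qed.

Lemma card_tri_vertices_link (x : 'I_v) :
  #|W :\ x| =
  2 * block_deg 3 s x + \sum_(B <- s | (x \in B) && (#|B| == 4)) #|B :&: (W :\ x)|.
Proof.
rewrite card_link big_K34_split /block_deg -sum_const_count; congr (_ + _).
rewrite big_seq_cond [RHS]big_seq_cond; apply: eq_bigr => B /and3P[Bs xB B3].
rewrite setIDA (setIidPl (tri_sub_tri_vertices B Bs B3)).
by move: B3; rewrite (cardsD1 x B) xB add1n eqSS => /eqP.
Qed.

Lemma block_deg3_ge3 (x : 'I_v) : 3 %| v.-1 -> x \in W -> 3 <= block_deg 3 s x.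
Proof. by rewrite inE -(block_deg_identity x) => ? ?; lia. Qed.

Lemma double_block_deg3_lt_card (x : 'I_v) : x \in W -> 2 * block_deg 3 s x < #|W|.
Proof. by move=> xW; rewrite (cardsD1 x W) xW card_tri_vertices_link; lia. Qed.

Section SaturatedTriangles.

Hypothesis saturated : forall x, x \in W -> #|W| <= (2 * block_deg 3 s x).+1.

Lemma card_K4_meet_tri_vertices_le1 (B : {set 'I_v}) :
  B \in s -> #|B| == 4 -> #|B :&: W| <= 1.
Proof.
move=> Bs B4; rewrite leqNgt; apply/negP => two.
have [x xBW] : exists x, x \in B :&: W by apply/set0Pn; rewrite -card_gt0; lia.
have meet_again : 0 < #|B :&: (W :\ x)|.
  by move: two; rewrite setIDA (cardsD1 x (B :&: W)) xBW; lia.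
move: xBW; rewrite inE => /andP[xB xW].
have := saturated xW; rewrite (cardsD1 x W) xW card_tri_vertices_link.
rewrite (big_rem B Bs) /= xB B4 /=.
(* [set] makes lia see the two (differently elaborated) occurrences of this
   cardinal as a single atom. *)
by move: meet_again; set c := #|B :&: (W :\ x)|; lia.
Qed.

Lemma sum_block_deg4_tri_vertices_le : \sum_(x in W) block_deg 4 s x <= beta s.
Proof.
rewrite sum_count_incident /beta -sum1_count big_seq_cond [leqRHS]big_seq_cond.
by apply: leq_sum => B /andP[Bs B4]; apply: card_K4_meet_tri_vertices_le1.
Qed.

End SaturatedTriangles.

End Decomposition.

Theorem mainTheorem19 (s : seq {set 'I_19}) :
  is_K34_decomp s -> 33 <= alpha s + beta s.
Proof.
move=> decomp; rewrite leqNgt; apply/negP => small.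
have count_eq := alpha_beta_count decomp.
have sum3 := sum_tri_deg_tri_vertices s.
have deg3 x : x \in tri_vertices s -> 3 <= block_deg 3 s x := block_deg3_ge3 decomp isT.
have [x0 x0W] : exists x, x \in tri_vertices s by apply: tri_vertices_nonempty; lia.
have W7 : #|tri_vertices s| = 7.
  have : 3 * #|tri_vertices s| <= \sum_(x in tri_vertices s) block_deg 3 s x.
    by rewrite mulnC -sum_nat_const; apply: leq_sum => x /deg3.
  have := double_block_deg3_lt_card decomp x0W; have := deg3 x0 x0W.
  by rewrite sum3; lia.
have sum4 : \sum_(x in tri_vertices s) block_deg 4 s x <= beta s.
  by apply: (sum_block_deg4_tri_vertices_le decomp) => x /deg3; rewrite W7; lia.
have := sum_block_deg_identity decomp (tri_vertices s).
by rewrite sum3 W7; lia.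
Qed.
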